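(* Let $X^{(n)}=\{X_1,\dots,X_n\}\subset\mathbb{R}^d$ and $u^{(n)}=\{u_1,\dots,u_n\}\subset\mathbb{R}^d$, and let $\hat T$ be a solution of the discrete optimal transport problem from $u^{(n)}$ to $X^{(n)}$. Then for every $i$, $$\mathrm{BP}(\hat T(u_i))\in[\mathrm{TD}^-(u_i;u^{(n)}),\ \mathrm{TD}(u_i;u^{(n)})].$$
   Context: An empirical optimal transport map $\hat T_{Z^{(n)}}$ from $u^{(n)}$ to a set $Z^{(n)}$ of $n$ points is any bijection $T:u^{(n)}\to Z^{(n)}$ minimizing $\frac1n\sum_{i=1}^n\|T(u_i)-u_i\|^2$; $\hat T=\hat T_{X^{(n)}}$. $\mathcal{Q}_{\ell,n}$ is the set of all sets $Z^{(n)}$ of $n$ points of $\mathbb{R}^d$ sharing exactly $n-\ell$ elements with $X^{(n)}$, and $\mathrm{BP}(\hat T(u_i))=\frac1n\min\{\ell\in\{1,\dots,n\}:\sup_{Z^{(n)}\in\mathcal{Q}_{\ell,n}}\|\hat T(u_i)-\hat T_{Z^{(n)}}(u_i)\|=\infty\}$. Tukey depth: $\mathrm{TD}(u;u^{(n)})=\min_{v\in\mathcal{S}^{d-1}}\frac1n\sum_{j}\mathbf{1}(\langle v,u_j-u\rangle\geq0)$. Lower Tukey depth: $\mathrm{TD}^-(u;u^{(n)})=\frac{n+1}{n}-\max_{v\in\mathcal{S}^{d-1}}\frac1n\sum_j\mathbf{1}(\langle v,u_j-u\rangle\geq0)$. *)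

From HB Require Import structures.
From mathcomp Require Import all_boot all_order all_algebra all_fingroup.
From mathcomp Require Import all_classical all_reals.
Set Implicit Arguments. Unset Strict Implicit. Unset Printing Implicit Defensive.
Import Order.TTheory GRing.Theory Num.Theory.
Local Open Scope ring_scope.
Local Open Scope classical_set_scope.

Section Defs.
Variables (R : realType) (d n : nat).
Notation vec := 'rV[R]_d.

Definition dotp (v w : vec) : R := \sum_(k < d) v 0 k * w 0 k.
Definition sqnorm (v : vec) : R := dotp v v.
Definition enorm (v : vec) : R := Num.sqrt (sqnorm v).

(* A bijection u^(n) -> Z^(n) is encoded by a permutation s : u_k |-> Z_(s k).
   It is an empirical optimal transport map iff it minimizes the mean
   squared displacement among all bijections. *)
Definition ot_cost (u Z : 'I_n -> vec) (s : 'S_n) : R :=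
  n%:R^-1 * \sum_(k < n) sqnorm (Z (s k) - u k).
Definition ot_optimal (u Z : 'I_n -> vec) (s : 'S_n) : Prop :=
  forall t : 'S_n, ot_cost u Z s <= ot_cost u Z t.

Definition inQ (X : 'I_n -> vec) (l : nat) (Z : 'I_n -> vec) : Prop :=
  injective Z /\ #|[set j : 'I_n | [exists k : 'I_n, Z j == X k]]| = (n - l)%N.

(* sup_{Z in Q_{l,n}} || T^(u_i) - T^_Z(u_i) || = +oo, where T^ = s_hat
   (an optimal map for X) and T^_Z = sel Z (an optimal map for Z). *)
Definition breaks (u X : 'I_n -> vec) (s_hat : 'S_n)
    (sel : ('I_n -> vec) -> 'S_n) (i : 'I_n) (l : nat) : Prop :=
  forall M : R, exists Z, inQ X l Z /\ M < enorm (X (s_hat i) - Z (sel Z i)).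

Definition BP (u X : 'I_n -> vec) (s_hat : 'S_n)
    (sel : ('I_n -> vec) -> 'S_n) (i : 'I_n) : R :=
  inf [set (l%:R / n%:R : R) | l in
        [set l : nat | (1 <= l <= n)%N /\ breaks u X s_hat sel i l]].

Definition hcount (u : 'I_n -> vec) (x v : vec) : nat :=
  #|[set j : 'I_n | 0 <= dotp v (u j - x)]|.

Definition sphere : set vec := [set v | enorm v = 1].

Definition TD (u : 'I_n -> vec) (x : vec) : R :=
  inf [set ((hcount u x v)%:R / n%:R : R) | v in sphere].

Definition TDm (u : 'I_n -> vec) (x : vec) : R :=
  (n.+1)%:R / n%:R - sup [set ((hcount u x v)%:R / n%:R : R) | v in sphere].

End Defs.

From HB Require Import structures.
From mathcomp Require Import all_boot all_order all_algebra all_fingroup.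
From mathcomp Require Import all_classical all_reals.
From mathcomp Require Import topology normedtype matrix_normedtype.
From mathcomp Require Import ring lra zify.
Import Order.TTheory GRing.Theory Num.Theory.
Import numFieldTopology.Exports numFieldNormedType.Exports.
Set Implicit Arguments. Unset Strict Implicit. Unset Printing Implicit Defensive.
Local Open Scope ring_scope.

(* Both bounds rest on the monotonicity of optimal assignments: an optimal
   bijection s for u and Z satisfies <Z (s j) - Z (s k), u_j - u_k> >= 0.
   Upper bound: for a unit vector v, let H = {j : <v, u_j - u_i> >= 0} and
   translate the |H| targets X (s_hat j), j in H, by t v.  For large t,
   monotonicity forces every optimal map of the new configuration to send u_i
   to a translated point, and these escape to infinity with t.
   Lower bound: if replacing l points sends the image of u_i arbitrarily far,
   the directions of minus these images accumulate at a unit vector p.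
   Monotonicity puts the n - l sample points still sent into X, up to a
   vanishing error, in the halfspace {j : <p, u_j - u_i> >= 0}, which thus
   contains n - l + 1 points once u_i is counted. *)

Section InnerProduct.
Variables (R : realType) (d : nat).
Implicit Types (v w x : 'rV[R]_d) (c : R).

Lemma dotpC v w : dotp v w = dotp w v.
Proof. by apply: eq_bigr => k _; rewrite mulrC. Qed.

Lemma dotpDr v w x : dotp v (w + x) = dotp v w + dotp v x.
Proof. by rewrite /dotp -big_split; apply: eq_bigr => k _; rewrite mxE mulrDr. Qed.

Lemma dotpZr c v w : dotp v (c *: w) = c * dotp v w.
Proof. by rewrite /dotp mulr_sumr; apply: eq_bigr => k _; rewrite mxE mulrCA. Qed.

Lemma dotpBr v w x : dotp v (w - x) = dotp v w - dotp v x.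
Proof. by rewrite dotpDr -scaleN1r dotpZr mulN1r. Qed.

Lemma dotpDl v w x : dotp (w + x) v = dotp w v + dotp x v.
Proof. by rewrite dotpC dotpDr !(dotpC v). Qed.

Lemma dotpBl v w x : dotp (w - x) v = dotp w v - dotp x v.
Proof. by rewrite dotpC dotpBr !(dotpC v). Qed.

Lemma dotpNl v w : dotp (- w) v = - dotp w v.
Proof. by rewrite -scaleN1r dotpC dotpZr mulN1r dotpC. Qed.

Lemma dotpZl c v w : dotp (c *: w) v = c * dotp w v.
Proof. by rewrite dotpC dotpZr dotpC. Qed.

Lemma dotp0r v : dotp v 0 = 0.
Proof. by rewrite /dotp big1 // => k _; rewrite mxE mulr0. Qed.

Lemma sqnormB v w : sqnorm (v - w) = sqnorm v + sqnorm w - 2 * dotp v w.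
Proof. by rewrite /sqnorm dotpBl !dotpBr (dotpC w v); ring. Qed.

Lemma sqnorm_ge0 v : 0 <= sqnorm v.
Proof. by apply: sumr_ge0 => k _; rewrite -expr2 sqr_ge0. Qed.

Lemma sqr_coord_le_sqnorm v k : v 0 k ^+ 2 <= sqnorm v.
Proof.
rewrite /sqnorm /dotp (bigD1 k) //= -expr2 lerDl.
by apply: sumr_ge0 => j _; rewrite -expr2 sqr_ge0.
Qed.

Lemma normr_coord_le_enorm v k : `|v 0 k| <= enorm v.
Proof. by rewrite -sqrtr_sqr ler_sqrt ?sqnorm_ge0 ?sqr_coord_le_sqnorm. Qed.

Lemma normr_coord_le v k : `|v 0 k| <= `|v|.
Proof. by rewrite [`|v|]mx_normrE; apply/bigmax_geP; right; exists (0, k). Qed.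

Lemma normr_dotp_le v w : `|dotp v w| <= d%:R * (`|v| * `|w|).
Proof.
rewrite mulr_natl -[d in _ *+ d]card_ord -sumr_const.
apply: le_trans (ler_norm_sum _ _ _) _; apply: ler_sum => k _.
by rewrite normrM ler_pM ?normr_coord_le.
Qed.

Lemma enorm_le v : enorm v <= d%:R * `|v|.
Proof.
rewrite -[d%:R * _]ger0_norm ?mulr_ge0 // -sqrtr_sqr ler_sqrt ?sqr_ge0 //.
have sq_le k : v 0 k * v 0 k <= `|v| ^+ 2.
  by apply: le_trans (ler_norm _) _; rewrite normrM -expr2 lerXn2r ?nnegrE ?normr_coord_le.
apply: le_trans (ler_sum _ (fun k _ => sq_le k)) _.
rewrite sumr_const card_ord -[_ *+ d]mulr_natl exprMn ler_wpM2r ?sqr_ge0 //.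
by rewrite -natrX ler_nat; case: (d) => // d'; rewrite expnS leq_pmulr ?expn1.
Qed.

Lemma coord_neq0 v : v != 0 -> exists k, v 0 k != 0.
Proof.
move=> /eqP v0; apply/not_existsP => v0k; apply/v0/rowP => k.
by rewrite mxE; apply/eqP; apply/negPn/negP/v0k.
Qed.

Lemma enorm_gt0 v : v != 0 -> 0 < enorm v.
Proof.
move=> /coord_neq0 [k vk].
by apply: lt_le_trans (normr_coord_le_enorm v k); rewrite normr_gt0.
Qed.

Lemma enorm_normalize v : v != 0 -> enorm ((enorm v)^-1 *: v) = 1.
Proof.
move=> /enorm_gt0 v0; have sqnormE : sqnorm v = enorm v ^+ 2.
  by rewrite sqr_sqrtr ?sqnorm_ge0.
rewrite {1}/enorm /sqnorm dotpZl dotpZr mulrA -expr2 -/(sqnorm v) sqnormE.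
by rewrite -exprMn mulVf ?gt_eqF // expr1n sqrtr1.
Qed.

Lemma sphere_neq0 v : sphere v -> v != 0.
Proof.
move=> v1; apply/eqP => v0; move: v1.
by rewrite /sphere /= v0 /enorm /sqnorm dotp0r sqrtr0 => /eqP; rewrite eq_sym oner_eq0.
Qed.

Lemma sphere_nonempty : (0 < d)%N -> exists v, sphere v.
Proof.
move=> d0; exists ((enorm (const_mx 1 : 'rV[R]_d))^-1 *: const_mx 1).
apply: enorm_normalize; apply/eqP => /rowP /(_ (Ordinal d0)) /eqP.
by rewrite !mxE oner_eq0.
Qed.

End InnerProduct.

Lemma card_classical_set (T : finType) (P : pred T) :
  #|[set x | P x]%classic| = #|[set x | P x]|.
Proof.
by apply: eq_card => x; rewrite finset.in_set; apply/idP/idP => [/set_mem|/mem_set].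
Qed.

Section Halfspaces.
Variables (R : realType) (d n : nat) (u : 'I_n -> 'rV[R]_d).

Lemma hcountE x v : hcount u x v = #|[set j | 0 <= dotp v (u j - x)]|.
Proof. exact: card_classical_set. Qed.

Lemma hcountZ x v c : 0 < c -> hcount u x (c *: v) = hcount u x v.
Proof.
by move=> c0; rewrite !hcountE; apply: eq_card => j; rewrite !inE dotpZl pmulr_rge0.
Qed.

Lemma hcount_self_gt0 i v : (0 < hcount u (u i) v)%N.
Proof. by rewrite hcountE; apply/card_gt0P; exists i; rewrite inE subrr dotp0r. Qed.

Lemma hcount_le x v : (hcount u x v <= n)%N.
Proof. by rewrite -[n in (_ <= n)%N]card_ord max_card. Qed.

End Halfspaces.

Section OptimalTransport.
Variables (R : realType) (d n : nat) (u Z : 'I_n -> 'rV[R]_d) (s : 'S_n).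
Hypothesis s_opt : ot_optimal u Z s.

Lemma ot_optimal_monotone j k : 0 <= dotp (Z (s j) - Z (s k)) (u j - u k).
Proof.
have [->|njk] := eqVneq j k; first by rewrite !subrr dotp0r.
have n_gt0 : (0 < n)%N by apply: leq_ltn_trans (ltn_ord j).
have := s_opt (tperm j k * s)%g; rewrite /ot_cost ler_pM2l ?invr_gt0 ?ltr0n //.
pose c (t : 'S_n) x := sqnorm (Z (t x) - u x).
have split_jk t : \sum_x c t x = c t j + c t k + \sum_(x | (x != j) && (x != k)) c t x.
  rewrite (bigD1 j) //= (bigD1 k) 1?eq_sym //= addrA.
  by congr (_ + _ + _); apply: eq_bigl => x; rewrite andbC.
rewrite !split_jk [X in _ <= _ + X](eq_bigr (c s)) => [|x /andP [xj xk]]; last first.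
  by rewrite /c permM tpermD // eq_sym.
rewrite lerD2r /c !permM tpermL tpermR !sqnormB => swap_ge.
have : 0 <= 2 * dotp (Z (s j) - Z (s k)) (u j - u k).
  by rewrite dotpBl !dotpBr; lra.
by rewrite pmulr_rge0.
Qed.

Lemma ot_optimal_mem_separated (i : 'I_n) (H A : {set 'I_n}) :
  i \in H -> #|A| = #|H| ->
  (forall j a b, j \notin H -> a \in A -> b \notin A ->
     dotp (Z a - Z b) (u j - u i) < 0) ->
  s i \in A.
Proof.
move=> iH cardA sep; apply/negPn/negP => siA.
have /subsetPn [j jA jH] : ~~ (s @^-1: A \subset H).
  apply/negP => sub; have : s @^-1: A \subset H :\ i.
    apply/fintype.subsetP => x xA; rewrite in_setD1 (fintype.subsetP sub x xA) andbT.
    by apply: contraNneq siA => <-; rewrite inE in xA.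
  move/subset_leq_card; rewrite card_preimset; last exact: perm_inj.
  by rewrite cardA (cardsD1 i H) iH add1n ltnn.
have := ot_optimal_monotone j i; rewrite leNgt sep //.
by rewrite inE in jA.
Qed.

End OptimalTransport.

Lemma near_pinfty_lt_mulr (R : realType) (c r : R) :
  0 < r -> \forall t \near +oo, c < t * r.
Proof.
move=> r0; near=> t; rewrite -ltr_pdivrMr //; near: t.
exact: nbhs_pinfty_gt (num_real _).
Unshelve. all: end_near.
Qed.

Lemma inQ_shift (R : realType) (d n : nat) (X : 'I_n -> 'rV[R]_d) (A : {set 'I_n})
    (w : 'rV[R]_d) :
  injective X -> (forall a b, X a + w != X b) ->
  inQ X #|A| (fun a => if a \in A then X a + w else X a).
Proof.
move=> X_inj w_off; split.
  move=> a b; case: ifP => aA; case: ifP => bA.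
  - by move/addIr/X_inj.
  - by move/eqP; rewrite (negbTE (w_off a b)).
  - by move/esym/eqP; rewrite (negbTE (w_off b a)).
  - exact: X_inj.
rewrite card_classical_set -[n in (n - _)%N]card_ord -(cardsC A) addKn.
apply: eq_card => a; rewrite !inE; case: ifP => aA /=.
  by apply/negbTE/existsP => -[k]; rewrite (negbTE (w_off a k)).
by apply/existsP; exists a.
Qed.

Section UpperBound.
Variables (R : realType) (d n : nat) (X u : 'I_n -> 'rV[R]_d).
Variables (s_hat : 'S_n) (sel : ('I_n -> 'rV[R]_d) -> 'S_n).
Hypotheses (X_inj : injective X) (sel_opt : forall Z, ot_optimal u Z (sel Z)).

Lemma breaks_hcount i v : sphere v -> breaks u X s_hat sel i (hcount u (u i) v).
Proof.
move=> v1 M; have [k vk] := coord_neq0 (sphere_neq0 v1).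
set H := [set j | 0 <= dotp v (u j - u i)]; set A := s_hat @: H.
near +oo_R => t.
have far : forall ab : 'I_n * 'I_n, `|M| + `|X ab.1 0 k - X ab.2 0 k| < t * `|v 0 k|.
  by near: t; apply: filter_forall => ab; apply: near_pinfty_lt_mulr; rewrite normr_gt0.
have sep : forall jab : 'I_n * ('I_n * 'I_n), dotp v (u jab.1 - u i) < 0 ->
    dotp (X jab.2.1 - X jab.2.2) (u jab.1 - u i) < t * - dotp v (u jab.1 - u i).
  near: t; apply: filter_forall => -[j [a b]] /=.
  case: (ltP (dotp v (u j - u i)) 0) => [neg|_]; last exact: nearW.
  have r0 : 0 < - dotp v (u j - u i) by rewrite oppr_gt0.
  near=> t' => _; near: t'; exact: near_pinfty_lt_mulr.
have off a b : X a + t *: v != X b.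
  apply/eqP => /(congr1 (fun w : 'rV[R]_d => w 0 k)); rewrite !mxE => E.
  have := far (b, a); rewrite /= -E addrAC subrr add0r.
  have : t * `|v 0 k| <= `|t * v 0 k| by rewrite normrM ler_wpM2r // ler_norm.
  by have := normr_ge0 M; lra.
pose Z a := if a \in A then X a + t *: v else X a.
have cardA : #|A| = #|H| by apply: card_imset; exact: perm_inj.
exists Z; split; first by rewrite hcountE -cardA; exact: inQ_shift.
have siA : sel Z i \in A.
  apply: (ot_optimal_mem_separated (sel_opt Z) (H := H)) => [||j a b jH aA bA].
  - by rewrite inE subrr dotp0r.
  - exact: cardA.
  have neg : dotp v (u j - u i) < 0 by move: jH; rewrite inE -ltNge.
  have := sep (j, (a, b)) neg; rewrite /Z aA (negbTE bA) /= addrAC.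
  by rewrite [dotp (_ + _ *: v) _]dotpDl dotpZl; lra.
rewrite /Z siA; apply: lt_le_trans (normr_coord_le_enorm _ k); rewrite !mxE.
have := far (s_hat i, sel Z i); rewrite /=.
set a := X (s_hat i) 0 k; set b := X (sel Z i) 0 k.
have : t * `|v 0 k| <= `|a - b| + `|a - (b + t * v 0 k)|.
  apply: le_trans (ler_normB _ _).
  have -> : a - b - (a - (b + t * v 0 k)) = t * v 0 k by ring.
  by rewrite normrM ler_wpM2r // ler_norm.
by have := ler_norm M; lra.
Unshelve. all: end_near.
Qed.

End UpperBound.

Section Compactness.
Local Open Scope classical_set_scope.

Lemma unit_sphere_compact (R : realType) (d : nat) :
  compact [set v : 'rV[R]_d | `|v| = 1].
Proof.
apply: bounded_closed_compact; first by exists 1; split => // M M1 x /= ->; exact: ltW.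
exact: (closed_comp (fun v _ => @norm_continuous _ _ v)) (@closed_eq _ 1).
Qed.

Lemma compact_cluster_seq (T : topologicalType) (K : set T) (w : nat -> T) :
  compact K -> (\forall m \near \oo, K (w m)) ->
  exists2 p, K p & forall (Q : set nat) (B : set T),
    (\forall m \near \oo, Q m) -> nbhs p B -> exists m, Q m /\ B (w m).
Proof.
move=> K_compact Kw; have [p [Kp p_cluster]] := K_compact (w @ \oo) _ Kw.
exists p => // Q B Q_near pB.
have wQ : (w @ \oo) (w @` Q) by apply: filterS Q_near => m Qm; exists m.
by have [_ [[m Qm <-] Bwm]] := p_cluster _ _ wQ pB; exists m.
Qed.

End Compactness.

Lemma halfspace_margin (R : realType) (d n : nat) (a : 'I_n -> 'rV[R]_d) (p : 'rV[R]_d) :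
  exists2 δ : R, 0 < δ &
    forall j w, ball p δ w -> - δ <= dotp w (a j) -> 0 <= dotp p (a j).
Proof.
have margin j : \forall δ \near (0 : R)^'+%classic, forall w,
    ball p δ w -> - δ <= dotp w (a j) -> 0 <= dotp p (a j).
  case: (leP 0 (dotp p (a j))) => [_|neg]; first exact: nearW.
  have c0 : 0 < 1 + d%:R * `|a j| by rewrite ltr_pwDl ?mulr_ge0.
  near=> δ => w; rewrite -ball_normE /= distrC => pw wa.
  have δc : δ * (1 + d%:R * `|a j|) < - dotp p (a j).
    by rewrite -ltr_pdivlMr //; near: δ; apply: nbhs_right_lt; rewrite divr_gt0 ?oppr_gt0.
  have := normr_dotp_le (w - p) (a j); rewrite dotpBl => /(le_trans (ler_norm _)).
  have : d%:R * (`|w - p| * `|a j|) <= d%:R * (δ * `|a j|).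
    by rewrite ler_wpM2l // ler_wpM2r // ltW.
  lra.
near (0 : R)^'+%classic => δ.
exists δ; first by near: δ; exact: nbhs_right_gt.
by near: δ; apply: filter_forall.
Unshelve. all: end_near.
Qed.

Section LowerBound.
Local Open Scope classical_set_scope.
Variables (R : realType) (d n : nat) (X u : 'I_n -> 'rV[R]_d).
Variables (s_hat : 'S_n) (sel : ('I_n -> 'rV[R]_d) -> 'S_n).
Hypothesis sel_opt : forall Z, ot_optimal u Z (sel Z).

Lemma card_halfspace_kept (Z : 'I_n -> 'rV[R]_d) (s : 'S_n) i l p (δ : R) :
  ot_optimal u Z s -> inQ X l Z ->
  (forall j w, ball p δ w -> - δ <= dotp w (u j - u i) -> 0 <= dotp p (u j - u i)) ->
  0 < `|Z (s i)| -> (forall k, Z (s i) != X k) ->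
  (forall j k, dotp (X k) (u j - u i) < δ * `|Z (s i)|) ->
  ball p δ (`|Z (s i)|^-1 *: - Z (s i)) ->
  ((n - l).+1 <= hcount u (u i) p)%N.
Proof.
move=> s_opt [_ cardZX] margin z0 z_out z_small wp; rewrite hcountE.
set U := [set j | [exists k, Z (s j) == X k]]%SET.
have cardU : #|U| = (n - l)%N.
  rewrite -cardZX card_classical_set -[RHS](card_preimset _ (@perm_inj _ s)).
  by apply: eq_card => j; rewrite !inE.
have iU : i \notin U by rewrite inE; apply/existsP => -[k]; rewrite (negbTE (z_out k)).
have <- : #|i |: U| = (n - l).+1 by rewrite cardsU1 iU cardU.
apply: subset_leq_card.
apply/fintype.subsetP => j; rewrite in_setU1 inE => /predU1P [->|].
  by rewrite subrr dotp0r.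
rewrite inE => /existsP [k /eqP Zk]; apply: margin wp _.
have := ot_optimal_monotone s_opt j i; rewrite Zk dotpBl.
have := z_small j k; rewrite dotpZl dotpNl mulrN lerN2 [_^-1 * _]mulrC ler_pdivrMr //.
lra.
Qed.

Lemma breaks_hcount_lower i l : breaks u X s_hat sel i l ->
  exists2 v, sphere v & (n.+1 <= hcount u (u i) v + l)%N.
Proof.
move=> brk; have [Zs Zs_far] := choice (fun m : nat => brk m%:R).
pose z m := Zs m (sel (Zs m) i).
have z_large r : \forall m \near \oo, r < `|z m|.
  near=> m; have [_ far] := Zs_far m.
  have : enorm (X (s_hat i) - z m) <= d%:R * (`|X (s_hat i)| + `|z m|).
    exact: le_trans (enorm_le _) (ler_wpM2l (ler0n _ _) (ler_normB _ _)).
  have : d%:R * (`|X (s_hat i)| + r) <= m%:R by near: m; exact: nbhs_infty_ger.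
  move=> m_ge z_le; rewrite ltNge; apply/negP => zr.
  have : d%:R * (`|X (s_hat i)| + `|z m|) <= d%:R * (`|X (s_hat i)| + r).
    by rewrite ler_wpM2l // lerD2l.
  lra.
pose w m := `|z m|^-1 *: - z m.
have w_unit : \forall m \near \oo, `|w m| = 1.
  near=> m; have z0 : 0 < `|z m| by near: m; exact: z_large.
  by rewrite normrZ normrN normfV normr_id mulVf ?gt_eqF.
have [p p1 p_cluster] := compact_cluster_seq (@unit_sphere_compact R d) w_unit.
have [δ δ0 margin] := halfspace_margin (fun j => u j - u i) p.
have z_good : \forall m \near \oo, [/\ 0 < `|z m|, forall k, z m != X k &
    forall jk : 'I_n * 'I_n, dotp (X jk.2) (u jk.1 - u i) < δ * `|z m|].
  near=> m; split.
  - by near: m; exact: z_large.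
  - have X_near : forall k, enorm (X (s_hat i) - X k) < m%:R.
      by near: m; apply: filter_forall => k; exact: nbhs_infty_gtr.
    move=> k; apply/eqP => zk; have [_] := Zs_far m; rewrite -/(z m) zk.
    by have := X_near k; lra.
  - near: m; apply: filter_forall => jk; near=> m.
    rewrite -ltr_pdivrMl // mulrC; near: m; exact: z_large.
have [m [[z0 z_out z_small] wm_p]] := p_cluster _ _ z_good (nbhsx_ballx p δ δ0).
have := card_halfspace_kept (sel_opt (Zs m)) (Zs_far m).1 margin z0 z_out
  (fun j k => z_small (j, k)) wm_p.
have p0 : p != 0 by rewrite -normr_eq0 (p1 : `|p| = 1) oner_eq0.
exists ((enorm p)^-1 *: p); first exact: enorm_normalize.
by rewrite hcountZ ?invr_gt0 ?enorm_gt0 //; lia.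
Unshelve. all: end_near.
Qed.

End LowerBound.

Theorem mainTheorem3 (R : realType) (d n : nat) (hd : (0 < d)%N) (hn : (0 < n)%N)
  (X u : 'I_n -> 'rV[R]_d) (hX : injective X) (hu : injective u)
  (s_hat : 'S_n) (hopt : ot_optimal u X s_hat)
  (sel : ('I_n -> 'rV[R]_d) -> 'S_n) (hsel : forall Z, ot_optimal u Z (sel Z))
  (i : 'I_n) :
  TDm u (u i) <= BP u X s_hat sel i <= TD u (u i).
Proof.
rewrite /TDm /BP /TD.
set T := [set _ | v in _]%classic; set S := [set _ | l in _]%classic.
have TS : (T `<=` S)%classic.
  move=> _ [v v1 <-]; exists (hcount u (u i) v) => //.
  by split; [rewrite hcount_le andbT; exact: hcount_self_gt0 | exact: breaks_hcount].
have T0 : (T !=set0)%classic.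
  by have [v v1] := sphere_nonempty R hd; exists ((hcount u (u i) v)%:R / n%:R), v.
have S0 : (S !=set0)%classic by have [x Tx] := T0; exists x; exact: TS.
have S_lb : has_lbound S by exists 0 => _ [l _ <-]; rewrite divr_ge0.
have T_ub : has_ubound T.
  by exists 1 => _ [v _ <-]; rewrite ler_pdivrMr ?ltr0n // mul1r ler_nat hcount_le.
apply/andP; split; apply: lb_le_inf => // y; last first.
  by move=> [v v1 <-]; apply/(ge_inf S_lb)/TS; exists v.
move=> [l [_ brk] <-]; have [v v1 hv] := breaks_hcount_lower hsel brk.
have := ub_le_sup T_ub (ex_intro2 _ _ v v1 erefl).
have : (n.+1)%:R / n%:R <= (hcount u (u i) v)%:R / n%:R + l%:R / n%:R :> R.
  by rewrite -mulrDl ler_pM2r ?invr_gt0 ?ltr0n // -natrD ler_nat.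
lra.
Qed.
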